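(* Let $\tilde f(t)=t\int_{1}^{\infty}x^{-tx}\,dx$ for real $t>0$. Then $\tilde f(t)\to1$ as $t\to+\infty$.
   Context: $x^{-tx}=\exp(-tx\ln x)$ for $x\ge1$. *)

From Stdlib Require Import Reals.
From Coquelicot Require Import Coquelicot.
Open Scope R_scope.

(* x^{-t x} = exp(-t x ln x) for x >= 1 *)
Definition integrand (t x : R) : R := exp (- t * x * ln x).

Definition ftilde (t : R) : R :=
  t * RInt_gen (integrand t) (at_point 1) (Rbar_locally p_infty).

From Stdlib Require Import Reals Lra Classical.
From Coquelicot Require Import Coquelicot.
Open Scope R_scope.

(* For x >= 1 we have x - 1 <= x ln x <= x (x - 1).  The lower bound dominates
   the integrand by exp(-t(x-1)), whose integral over [1, oo) is 1/t: this gives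
   convergence and ftilde t <= 1.  The upper bound, used only on [1, 1 + d],
   bounds the integrand below by exp(-t(1+d)(x-1)), whence
   ftilde t >= 1 - d - exp(-td) for every d > 0. *)

Lemma exp_le_compat x y : x <= y -> exp x <= exp y.
Proof. intros [Hlt | ->]; [left; apply exp_increasing |]; lra. Qed.

Lemma ln_le_sub_1 x : 0 < x -> ln x <= x - 1.
Proof.
  intros Hx. rewrite <- (ln_exp (x - 1)).
  apply ln_le; [exact Hx |]. pose proof (exp_ineq1_le (x - 1)). lra.
Qed.

Lemma sub_1_le_x_ln x : 0 < x -> x - 1 <= x * ln x.
Proof.
  intros Hx.
  assert (Hinv : - ln x <= / x - 1).
  { rewrite <- ln_Rinv by exact Hx. apply ln_le_sub_1, Rinv_0_lt_compat, Hx. }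
  assert (Hxinv : x * / x = 1) by (field; lra).
  nra.
Qed.

Lemma exp_neg_lt_inv s : 0 < s -> exp (- s) < / s.
Proof.
  intros Hs. rewrite exp_Ropp. apply Rinv_lt_contravar.
  - apply Rmult_lt_0_compat; [exact Hs | apply exp_pos].
  - pose proof (exp_ineq1_le s). lra.
Qed.

Lemma nondecreasing_bounded_is_lim (F : R -> R) a M :
  (forall b b', a <= b -> b <= b' -> F b <= F b') ->
  (forall b, a <= b -> F b <= M) ->
  exists l : R, is_lim F p_infty l /\ (forall b, a <= b -> F b <= l) /\ l <= M.
Proof.
  intros Hmono HM.
  set (E := fun y => exists b, a <= b /\ y = F b).
  assert (HE : bound E) by (exists M; intros y [b [Hab ->]]; auto).
  assert (HEne : exists y, E y) by (exists (F a), a; split; lra).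
  destruct (completeness E HE HEne) as [l [Hub Hlub]].
  assert (HFl : forall b, a <= b -> F b <= l) by (intros b Hb; apply Hub; exists b; auto).
  exists l. split; [| split; [exact HFl | apply Hlub; intros y [b [Hab ->]]; auto]].
  apply is_lim_spec. intros eps.
  assert (Hb0 : exists b0, a <= b0 /\ l - eps < F b0).
  { apply NNPP. intros Hnone.
    assert (l <= l - eps).
    { apply Hlub. intros y [b [Hab ->]]. apply Rnot_lt_le. intros Hlt.
      apply Hnone. exists b; auto. }
    destruct eps; simpl in *; lra. }
  destruct Hb0 as [b0 [Hab0 Hb0]].
  exists b0. intros x Hx.
  pose proof (Hmono b0 x Hab0 ltac:(lra)). pose proof (HFl x ltac:(lra)).
  rewrite Rabs_left1 by lra. lra.
Qed.

Lemma is_RInt_gen_p_infty_of_is_lim (f : R -> R) a (l : R) :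
  (forall b, a <= b -> ex_RInt f a b) ->
  is_lim (fun b => RInt f a b) p_infty l ->
  is_RInt_gen f (at_point a) (Rbar_locally p_infty) l.
Proof.
  intros Hex Hlim. apply is_lim_spec in Hlim.
  apply filterlimi_locally. intros eps.
  destruct (Hlim eps) as [M HM].
  exists (fun x => x = a) (fun y => Rmax a M < y).
  - reflexivity.
  - exists (Rmax a M). auto.
  - intros x y -> Hy. exists (RInt f a y). split.
    + apply (@RInt_correct R_CompleteNormedModule), Hex.
      pose proof (Rmax_l a M). simpl in Hy. lra.
    + apply HM. pose proof (Rmax_r a M). simpl in Hy. lra.
Qed.

Lemma is_RInt_gen_nonneg_bounded (f : R -> R) a M :
  (forall b, a <= b -> ex_RInt f a b) ->
  (forall x, a <= x -> 0 <= f x) ->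
  (forall b, a <= b -> RInt f a b <= M) ->
  exists l, is_RInt_gen f (at_point a) (Rbar_locally p_infty) l /\
    (forall b, a <= b -> RInt f a b <= l) /\ l <= M.
Proof.
  intros Hex Hpos HM.
  assert (Hmono : forall b b', a <= b -> b <= b' -> RInt f a b <= RInt f a b').
  { intros b b' Hab Hbb'.
    assert (Hex' : ex_RInt f b b').
    { apply (ex_RInt_Chasles_2 f a b b'); [lra | apply Hex; lra]. }
    rewrite <- (RInt_Chasles f a b b' (Hex b Hab) Hex').
    assert (0 <= RInt f b b') by (apply RInt_ge_0; auto; intros; apply Hpos; lra).
    unfold plus; simpl. lra. }
  destruct (nondecreasing_bounded_is_lim (fun b => RInt f a b) a M Hmono HM)
    as [l [Hlim Hbounds]].
  exists l. split; [| exact Hbounds].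
  apply is_RInt_gen_p_infty_of_is_lim; assumption.
Qed.

Lemma is_RInt_exp_affine c b : c <> 0 ->
  is_RInt (fun x => exp (- c * (x - 1))) 1 b ((1 - exp (- c * (b - 1))) / c).
Proof.
  intros Hc.
  set (G := fun x => - exp (- c * (x - 1)) / c).
  replace ((1 - exp (- c * (b - 1))) / c) with (minus (G b) (G 1)).
  2: { unfold G, minus, plus, opp; simpl. replace (1 - 1) with 0 by ring.
       rewrite Rmult_0_r, exp_0. field. exact Hc. }
  apply (@is_RInt_derive R_CompleteNormedModule); intros x _.
  - unfold G. auto_derive; [exact I |].
    replace (x + - (1)) with (x - 1) by ring. field. exact Hc.
  - apply (@ex_derive_continuous R_AbsRing R_NormedModule). auto_derive. exact I.
Qed.

Lemma ex_RInt_integrand t a b : 0 < a -> a <= b -> ex_RInt (integrand t) a b.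
Proof.
  intros Ha Hab. apply (@ex_RInt_continuous R_CompleteNormedModule). intros x Hx.
  rewrite Rmin_left in Hx by exact Hab.
  apply (@ex_derive_continuous R_AbsRing R_NormedModule).
  unfold integrand. auto_derive. lra.
Qed.

Lemma integrand_le_exp_affine t x : 0 <= t -> 0 < x ->
  integrand t x <= exp (- t * (x - 1)).
Proof.
  intros Ht Hx. apply exp_le_compat.
  pose proof (sub_1_le_x_ln x Hx). nra.
Qed.

Lemma exp_affine_le_integrand t d x : 0 <= t -> 1 <= x <= 1 + d ->
  exp (- (t * (1 + d)) * (x - 1)) <= integrand t x.
Proof.
  intros Ht Hx. apply exp_le_compat.
  pose proof (ln_le_sub_1 x ltac:(lra)).
  assert (x * ln x <= (1 + d) * (x - 1)) by nra.
  nra.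
Qed.

Lemma RInt_integrand_le t b : 0 < t -> 1 <= b -> RInt (integrand t) 1 b <= / t.
Proof.
  intros Ht Hb.
  apply Rle_trans with (RInt (fun x => exp (- t * (x - 1))) 1 b).
  - apply RInt_le; [exact Hb | apply ex_RInt_integrand; lra
                  | eexists; apply is_RInt_exp_affine; lra |].
    intros x Hx. apply integrand_le_exp_affine; lra.
  - rewrite (is_RInt_unique _ _ _ _ (is_RInt_exp_affine t b ltac:(lra))).
    pose proof (exp_pos (- t * (b - 1))). unfold Rdiv.
    rewrite <- (Rmult_1_l (/ t)) at 2.
    apply Rmult_le_compat_r; [left; apply Rinv_0_lt_compat |]; lra.
Qed.

Lemma integrand_RInt_gen t : 0 < t ->
  exists l, is_RInt_gen (integrand t) (at_point 1) (Rbar_locally p_infty) l /\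
    (forall b, 1 <= b -> RInt (integrand t) 1 b <= l) /\ l <= / t.
Proof.
  intros Ht. apply is_RInt_gen_nonneg_bounded.
  - intros b Hb. apply ex_RInt_integrand; lra.
  - intros x _. left. apply exp_pos.
  - intros b Hb. apply RInt_integrand_le; assumption.
Qed.

Lemma t_RInt_integrand_ge t d : 0 < t -> 0 < d ->
  1 - d - exp (- (t * d)) <= t * RInt (integrand t) 1 (1 + d).
Proof.
  intros Ht Hd. set (c := t * (1 + d)).
  assert (Hc : 0 < c) by (unfold c; nra).
  assert (Hlow : (1 - exp (- c * d)) / c <= RInt (integrand t) 1 (1 + d)).
  { pose proof (is_RInt_unique _ _ _ _ (is_RInt_exp_affine c (1 + d) ltac:(lra))) as HI.
    replace (1 + d - 1) with d in HI by ring. rewrite <- HI.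
    apply RInt_le; [lra | eexists; apply is_RInt_exp_affine; lra
                  | apply ex_RInt_integrand; lra |].
    intros x Hx. apply exp_affine_le_integrand; lra. }
  assert (Hcd : exp (- c * d) <= exp (- (t * d))) by (apply exp_le_compat; unfold c; nra).
  pose proof (exp_pos (- (t * d))).
  assert (Hscale : t * ((1 - exp (- c * d)) / c) = (1 - exp (- c * d)) / (1 + d))
    by (unfold c; field; lra).
  (* 1 / (1 + d) >= 1 - d *)
  assert (Hdiv : 1 - d - exp (- (t * d)) <= (1 - exp (- c * d)) / (1 + d)).
  { apply Rmult_le_reg_r with (1 + d); [lra |].
    unfold Rdiv. rewrite Rmult_assoc, Rinv_l by lra. nra. }
  pose proof (Rmult_le_compat_l t _ _ ltac:(lra) Hlow). lra.
Qed.

Lemma ftilde_bounds t d : 0 < t -> 0 < d ->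
  1 - d - exp (- (t * d)) <= ftilde t <= 1.
Proof.
  intros Ht Hd.
  destruct (integrand_RInt_gen t Ht) as [l [Hl [Hpartial Hle]]].
  unfold ftilde. rewrite (is_RInt_gen_unique _ _ Hl). split.
  - apply Rle_trans with (t * RInt (integrand t) 1 (1 + d)).
    + apply t_RInt_integrand_ge; assumption.
    + apply Rmult_le_compat_l; [lra | apply Hpartial; lra].
  - replace 1 with (t * / t) by (field; lra). apply Rmult_le_compat_l; lra.
Qed.

Theorem mainTheorem9 :
  (forall t : R, 0 < t ->
     ex_RInt_gen (integrand t) (at_point 1) (Rbar_locally p_infty)) /\
  is_lim ftilde p_infty 1.
Proof.
  split.
  - intros t Ht. destruct (integrand_RInt_gen t Ht) as [l [Hl _]]. exists l. exact Hl.
  - apply is_lim_spec. intros eps.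
    set (d := eps / 2).
    assert (Hd : 0 < d) by (unfold d; destruct eps; simpl; lra).
    (* t > 1/d^2 gives td > 1/d, hence exp(-td) < 1/(td) < d. *)
    exists (/ (d * d)). intros t Ht.
    assert (Htd : / d < t * d).
    { apply Rmult_lt_compat_r with (r := d) in Ht; [| exact Hd].
      replace (/ (d * d) * d) with (/ d) in Ht by (field; lra). exact Ht. }
    assert (Hinvd : 0 < / d) by (apply Rinv_0_lt_compat, Hd).
    assert (Hexp : exp (- (t * d)) < d).
    { apply Rlt_trans with (/ (t * d)); [apply exp_neg_lt_inv; lra |].
      rewrite <- (Rinv_inv d) at 2. apply Rinv_lt_contravar; nra. }
    destruct (ftilde_bounds t d ltac:(nra) Hd).
    rewrite Rabs_left1 by lra. unfold d in *. lra.
Qed.
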